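(* Let $(t_j^i)_{0\le j\le i}$ be real numbers and let $h_{j,k}^i$ ($0\le k\le i$, $0\le j\le i-k$) be defined by $h_{j,0}^i=t_j^i$ and $h_{j,k}^i=h_{j,k-1}^{i-1}+h_{j,k-1}^{i}+h_{j+1,k-1}^{i}$ for $k\ge 1$. Suppose that there is a constant $c$ with $t_0^i=c$ for all $i\ge 0$, and that Pascal's rule $t^i_{j}=t^{i-1}_{j-1}+t^{i-1}_{j}$ holds for all $i\ge 2$, $1\le j\le i-1$. Fix $j,k\ge 0$ and let $m=j+k+1$. Then the sequence $\{h_{j,k}^{i}\}_{i=j+k}^{\infty}$ satisfies the $m$-th order homogeneous linear recurrence $$\sum_{\ell=0}^{m}(-1)^{\ell}\binom{m}{\ell} h_{j,k}^{i+\ell}=0\qquad\text{for all } i\geq j+k.$$ *)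

From mathcomp Require Import all_boot all_order all_algebra.
From mathcomp Require Import reals.
Set Implicit Arguments. Unset Strict Implicit. Unset Printing Implicit Defensive.
Import Order.TTheory GRing.Theory Num.Theory.
Local Open Scope ring_scope.

(* t i j stands for t_j^i;  hh t k i j stands for h_{j,k}^i:
   h_{j,0}^i = t_j^i,
   h_{j,k}^i = h_{j,k-1}^{i-1} + h_{j,k-1}^i + h_{j+1,k-1}^i  (k >= 1).
   The function is total; values outside the range 0<=k<=i, 0<=j<=i-k are
   junk but never used for the values in the range (the recursion stays
   within the range there). *)
Fixpoint hh (R : ringType) (t : nat -> nat -> R) (k i j : nat) : R :=
  match k with
  | 0 => t i j
  | k'.+1 => hh t k' i.-1 j + hh t k' i j + hh t k' i j.+1
  end.

From mathcomp Require Import all_boot all_order all_algebra.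
From mathcomp Require Import reals.
Import Order.TTheory GRing.Theory Num.Theory.
Set Implicit Arguments. Unset Strict Implicit.
Local Open Scope ring_scope.

(* The sum in the theorem is, up to sign, the m-th finite difference of the
   sequence, so the claim is that h_{j,k} is a polynomial of degree < j+k+1
   in i from i = j+k on.  Pascal's rule says that the difference of column
   j+1 of t is column j, and column 0 is constant, so column j is killed by
   differences of order j+1.  The recursion for h adds a shifted copy of
   h_{j,k-1}, h_{j,k-1} itself and h_{j+1,k-1}, each killed by differences of
   order j+k+1 by induction on k. *)

Section FiniteDifference.
Variable R : pzRingType.
Implicit Types (f g : nat -> R) (n b i : nat).

Definition findiff n f i : R :=
  \sum_(l < n.+1) (-1) ^+ l * ('C(n, l))%:R * f (i + l)%N.

Lemma findiff0 f i : findiff 0 f i = f i.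
Proof. by rewrite /findiff big_ord1 expr0 bin0 !mul1r addn0. Qed.

Lemma findiffS n f i : findiff n.+1 f i = findiff n f i - findiff n f i.+1.
Proof.
rewrite /findiff big_ord_recl /=.
under eq_bigr => l _ do rewrite /bump /= binS natrD mulrDr mulrDl exprS mulN1r.
rewrite big_split /= addrA; congr (_ + _).
  rewrite [in LHS]big_ord_recr /= (bin_small (ltnSn n)) mulr0n mulr0 mul0r addr0.
  rewrite [in RHS]big_ord_recl /= !bin0 !addn0; congr (_ + _).
  by apply: eq_bigr => l _; rewrite /bump /= exprS mulN1r !mulNr add1n addnS.
by rewrite -sumrN; apply: eq_bigr => l _; rewrite addnS addSn !mulNr.
Qed.

Lemma findiffD n f g i :
  findiff n (fun x => f x + g x) i = findiff n f i + findiff n g i.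
Proof. by rewrite /findiff -big_split; apply: eq_bigr => l _; rewrite mulrDr. Qed.

Lemma findiffN n f i : findiff n (fun x => - f x) i = - findiff n f i.
Proof. by rewrite /findiff -sumrN; apply: eq_bigr => l _; rewrite mulrN. Qed.

Lemma findiff_succ n f i : findiff n (fun x => f x.+1) i = findiff n f i.+1.
Proof. by apply: eq_bigr => l _; rewrite addSn. Qed.

Lemma findiff_pred n f i : findiff n (fun x => f x.-1) i.+1 = findiff n f i.
Proof. by apply: eq_bigr => l _; rewrite addSn. Qed.

Lemma eq_findiff n f g i :
  (forall x, (i <= x)%N -> f x = g x) -> findiff n f i = findiff n g i.
Proof. by move=> eq_fg; apply: eq_bigr => l _; rewrite eq_fg // leq_addr. Qed.

Lemma findiffSdiff n f i :
  findiff n.+1 f i = - findiff n (fun x => f x.+1 - f x) i.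
Proof. by rewrite findiffD findiffN findiff_succ findiffS opprB. Qed.

Definition recurrent n b f := forall i, (b <= i)%N -> findiff n f i = 0.

Lemma recurrent_eq n b f g :
  (forall x, (b <= x)%N -> f x = g x) -> recurrent n b f -> recurrent n b g.
Proof.
move=> eq_fg rf i bi; rewrite -(rf i bi); apply: eq_findiff => x ix.
by rewrite eq_fg // (leq_trans bi).
Qed.

Lemma recurrent_start n b b' f :
  (b <= b')%N -> recurrent n b f -> recurrent n b' f.
Proof. by move=> bb' rf i b'i; rewrite rf // (leq_trans bb'). Qed.

Lemma recurrentS n b f : recurrent n b f -> recurrent n.+1 b f.
Proof. by move=> rf i bi; rewrite findiffS !rf ?subrr // ltnW. Qed.

Lemma recurrentD n b f g :
  recurrent n b f -> recurrent n b g -> recurrent n b (fun x => f x + g x).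
Proof. by move=> rf rg i bi; rewrite findiffD rf // rg // addr0. Qed.

Lemma recurrent_pred n b f :
  recurrent n b f -> recurrent n b.+1 (fun x => f x.-1).
Proof. by move=> rf [|i] // bi; rewrite findiff_pred rf. Qed.

Lemma recurrent_diff n b f :
  recurrent n b (fun x => f x.+1 - f x) -> recurrent n.+1 b f.
Proof. by move=> rdf i bi; rewrite findiffSdiff rdf ?oppr0. Qed.

End FiniteDifference.

Section PascalTriangle.
Variables (R : nzRingType) (t : nat -> nat -> R) (c : R).
Hypothesis t_col0 : forall i : nat, t i 0%N = c.
Hypothesis t_pascal : forall i j : nat, (2 <= i)%N -> (1 <= j)%N ->
  (j <= i - 1)%N -> t i j = t i.-1 j.-1 + t i.-1 j.

Lemma recurrent_column j : recurrent j.+1 j (fun i => t i j).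
Proof.
elim: j => [|j IH]; apply: recurrent_diff.
  apply: (@recurrent_eq _ 0 0 (fun=> 0)) => [x _|i _]; last by rewrite findiff0.
  by rewrite !t_col0 subrr.
apply: (recurrent_eq _ (recurrent_start (leqnSn j) IH)) => x jx.
by rewrite (t_pascal (i := x.+1)) ?subn1 ?addrK //; exact: leq_ltn_trans (leq0n j) jx.
Qed.

Lemma recurrent_hh k j : recurrent (j + k).+1 (j + k) (fun i => hh t k i j).
Proof.
elim: k j => [|k IH] j; first by rewrite addn0; apply: recurrent_column.
rewrite addnS; apply: recurrentD; first apply: recurrentD.
- exact: recurrentS (recurrent_pred (IH j)).
- exact: recurrentS (recurrent_start (leqnSn _) (IH j)).
- by rewrite -addSn; apply: IH.
Qed.

End PascalTriangle.

Theorem theorem6 (R : realType) (t : nat -> nat -> R) (c : R)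
  (hc : forall i : nat, t i 0%N = c)
  (hpascal : forall i j : nat, (2 <= i)%N -> (1 <= j)%N -> (j <= i - 1)%N ->
     t i j = t i.-1 j.-1 + t i.-1 j)
  (j k : nat) :
  let m := (j + k).+1 in
  forall i : nat, (j + k <= i)%N ->
    \sum_(l < m.+1) (-1) ^+ l * ('C(m, l))%:R * hh t k (i + l)%N j = 0.
Proof.
move=> m i ji.
exact: recurrent_hh hc hpascal k j i ji.
Qed.
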